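(* Let $p,q,r$ be idempotents in a unital ring $A$ with $p\perp r$ and $q\perp r$. If $\operatorname{sr}((p+r)A(q+r))=1$, then $\operatorname{sr}(pAq)=1$.
   Context: Idempotents $e,f$ are orthogonal, $e\perp f$, if $ef=fe=0$. For idempotents $p,q$ in a unital ring $A$, $\operatorname{sr}(pAq)=1$ means: whenever $a\in pAq$, $x\in qAp$, $b\in pAp$ satisfy $ax+b=p$, there exist $y\in pAq$, $z\in qAp$ with $(a+by)z=p$. *)

From mathcomp Require Import all_boot all_algebra.
Set Implicit Arguments. Unset Strict Implicit. Unset Printing Implicit Defensive.
Import GRing.Theory.
Local Open Scope ring_scope.

Definition idem {A : pzRingType} (e : A) : Prop := e * e = e.

Definition orth {A : pzRingType} (e f : A) : Prop := e * f = 0 /\ f * e = 0.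

Definition in_corner {A : pzRingType} (p q a : A) : Prop := a = p * a * q.

Definition sr1 {A : pzRingType} (p q : A) : Prop :=
  forall a x b : A, in_corner p q a -> in_corner q p x -> in_corner p p b ->
    a * x + b = p ->
    exists y z : A, in_corner p q y /\ in_corner q p z /\ (a + b * y) * z = p.

(* Extend a corner equation [a x + b = p] by [r] on the diagonal: [(a + r)(x + r) + b = p + r]
   lives in the corner [(p + r) A (q + r)], which yields [y, z] with [(a + r + b y) z = p + r].
   Left multiplication by [r] shows [r z = r], so [r z p = 0]; compressing by [p] on the left
   and right then gives [(a + b (p y q)) (q z p) = p]. *)
From mathcomp Require Import all_boot all_algebra.
Local Open Scope ring_scope.
Import GRing.Theory.
Set Implicit Arguments. Unset Strict Implicit.

Section Corners.
Variable A : pzRingType.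
Implicit Types p q r a b : A.

Lemma in_corner_mull p q a : idem p -> in_corner p q a -> p * a = a.
Proof. by move=> pp ->; rewrite !mulrA pp. Qed.

Lemma in_corner_mulr p q a : idem q -> in_corner p q a -> a * q = a.
Proof. by move=> qq ->; rewrite -!mulrA qq. Qed.

Lemma in_corner_orthl p q r a : orth p r -> in_corner p q a -> r * a = 0.
Proof. by move=> [_ rp] ->; rewrite !mulrA rp !mul0r. Qed.

Lemma in_corner_orthr p q r a : orth q r -> in_corner p q a -> a * r = 0.
Proof. by move=> [qr _] ->; rewrite -!mulrA qr !mulr0. Qed.

Lemma in_cornerD p q a b :
  in_corner p q a -> in_corner p q b -> in_corner p q (a + b).
Proof. by rewrite /in_corner => {1}-> {1}->; rewrite mulrDr mulrDl. Qed.

Lemma in_corner_compress p q a : idem p -> idem q -> in_corner p q (p * a * q).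
Proof. by move=> pp qq; rewrite /in_corner !mulrA pp -!mulrA qq. Qed.

Lemma idemD_orth p r : idem p -> idem r -> orth p r -> idem (p + r).
Proof.
by move=> pp rr [pr rp]; rewrite /idem mulrDl !mulrDr pp rr pr rp addr0 add0r.
Qed.

End Corners.

Section OrthogonalExtension.
Variables (A : pzRingType) (p q r : A).
Hypotheses (pp : idem p) (qq : idem q) (rr : idem r).
Hypotheses (pr : orth p r) (qr : orth q r).

Lemma in_corner_extend a : in_corner p q a -> in_corner (p + r) (q + r) a.
Proof.
move=> Ha; rewrite /in_corner mulrDr !mulrDl (in_corner_orthl pr Ha) !mul0r.
by rewrite -(mulrA p a r) (in_corner_orthr qr Ha) mulr0 !addr0 -Ha.
Qed.

Lemma in_corner_extend_diag : in_corner (p + r) (q + r) r.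
Proof.
have [[pr0 _] [_ rq0]] := (pr, qr).
by rewrite /in_corner mulrDl pr0 rr add0r mulrDr rq0 rr add0r.
Qed.

Lemma extend_corner_equation a x b :
  in_corner p q a -> in_corner q p x ->
  a * x + b = p -> (a + r) * (x + r) + b = p + r.
Proof.
move=> Ha Hx <-; rewrite mulrDl !mulrDr (in_corner_orthr qr Ha).
rewrite (in_corner_orthl qr Hx) rr addr0 add0r.
by rewrite -addrA [r + b]addrC addrA.
Qed.

Section Compression.
Variables (a b y z : A).
Hypotheses (Ha : in_corner p q a) (Hb : in_corner p p b).
Hypotheses (Hy : in_corner (p + r) (q + r) y).
Hypothesis Hsol : (a + r + b * y) * z = p + r.

Lemma extended_solution_fixes_r : r * z = r.
Proof.
have [_ rp] := pr.
have := congr1 (fun t => r * t) Hsol; rewrite /= mulrA !mulrDr.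
by rewrite (in_corner_orthl pr Ha) rr mulrA (in_corner_orthl pr Hb) rp mul0r add0r addr0.
Qed.

Lemma compressed_solution : (a + b * (p * y * q)) * (q * z * p) = p.
Proof.
have [pr0 rp0] := pr.
have pw : p * (a + r + b * y) = a + b * y.
  by rewrite !mulrDr (in_corner_mull pp Ha) pr0 addr0 mulrA (in_corner_mull pp Hb).
have wzp : (a + b * y) * z * p = p.
  by rewrite -pw -(mulrA p) Hsol mulrDr mulrDl pp pr0 mul0r addr0 pp.
have yf : y * (q + r) = y by apply: in_corner_mulr (idemD_orth qq rr qr) Hy.
have byz : b * y * z * p = b * y * q * z * p.
  rewrite -{1}yf !mulrDr !mulrDl !mulrA -(mulrA (b * y) r z) extended_solution_fixes_r.
  by rewrite -(mulrA (b * y) r p) rp0 mulr0 addr0.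
rewrite mulrDl !mulrA (in_corner_mulr qq Ha) (in_corner_mulr pp Hb).
by rewrite -(mulrA (b * y) q q) qq -byz -mulrDl -mulrDl.
Qed.

End Compression.
End OrthogonalExtension.

Theorem lemma4 (A : pzRingType) (p q r : A) :
  idem p -> idem q -> idem r ->
  orth p r -> orth q r ->
  sr1 (p + r) (q + r) -> sr1 p q.
Proof.
move=> pp qq rr pr qr sr_ext a x b Ha Hx Hb Hab.
have [y [z [Hy [_ Hsol]]]] := sr_ext (a + r) (x + r) b
  (in_cornerD (in_corner_extend pr qr Ha) (in_corner_extend_diag rr pr qr))
  (in_cornerD (in_corner_extend qr pr Hx) (in_corner_extend_diag rr qr pr))
  (in_corner_extend pr pr Hb) (extend_corner_equation rr qr Ha Hx Hab).
exists (p * y * q), (q * z * p).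
split; [exact: in_corner_compress | split; first exact: in_corner_compress].
exact: (compressed_solution pp qq rr pr qr Ha Hb Hy Hsol).
Qed.
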